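(* Let $(X,\|\cdot\|)$ be a normed linear space over $\mathbb{R}$ or $\mathbb{C}$, and let $a,x_1,\dots,x_n\in X\setminus\{0\}$ satisfy $\|x_j-a\|\le\|a\|$ for each $j\in\{1,\dots,n\}$. Then for any $p_1,\dots,p_n\ge0$ with $\sum_{j=1}^n p_j=1$, $$\frac{\big\|\sum_{j=1}^n p_jx_j\big\|}{\sum_{j=1}^n p_j\|x_j\|}\ \ge\ \frac{\|a\|-\max_{1\le j\le n}\|x_j-a\|}{2\|a\|}\ (\ge0).$$ *)

From HB Require Import structures.
From mathcomp Require Import all_boot all_order all_algebra.
From mathcomp Require Import all_classical all_reals all_analysis.
From mathcomp Require Import complex.

From HB Require Import structures.
From mathcomp Require Import all_boot all_order all_algebra.
From mathcomp Require Import all_classical all_reals all_analysis.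
From mathcomp Require Import complex.
Import Order.TTheory GRing.Theory Num.Theory.
Import numFieldNormedType.Exports.
Local Open Scope ring_scope.

(* Let M := max_j ||x_j - a|| <= ||a||.  Writing sum_j p_j x_j = a + sum_j p_j (x_j - a)
   shows that the numerator is at least ||a|| - M, while ||x_j|| <= ||a|| + M <= 2 ||a||
   bounds the denominator by 2 ||a||.  The triangle inequality puts the numerator below
   the denominator, which also settles the case of a vanishing denominator. *)

Lemma real_le_bigmax (K : numDomainType) (I : eqType) (r : seq I) (F : I -> K) j :
  (forall i, F i \is Num.real) -> j \in r -> F j <= \big[Num.max/0]_(i <- r) F i.
Proof.
move=> F_real; elim: r => // i r IHr; rewrite in_cons big_cons.
have cmp : F i >=< \big[Num.max/0]_(k <- r) F k.
  by apply: real_comparable => //; apply: bigmax_real.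
rewrite comparable_le_max // => /orP[/eqP-> | j_r]; first by rewrite lexx.
by rewrite IHr ?orbT.
Qed.

Lemma ler_div_chain (K : numFieldType) (u v N D : K) :
  0 <= u -> u <= N -> N <= D -> D <= v -> u / v <= N / D.
Proof.
move=> u_ge0 uN ND Dv.
have [D0 | D_neq0] := eqVneq D 0.
  have N0 : N = 0 by apply: le_anti; rewrite (le_trans u_ge0 uN) andbT -D0.
  have u0 : u = 0 by apply: le_anti; rewrite u_ge0 andbT -N0.
  by rewrite u0 N0 !mul0r.
have D_gt0 : 0 < D by rewrite lt_def D_neq0 (le_trans u_ge0 (le_trans uN ND)).
have v_gt0 : 0 < v := lt_le_trans D_gt0 Dv.
by rewrite ler_pM ?invr_ge0 ?(ltW v_gt0) // lef_pV2 ?posrE.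
Qed.

Section ConvexCombination.
Context {K : numFieldType} {V : normedModType K} {n : nat} {p : 'I_n -> K}.
Hypotheses (p_ge0 : forall j, 0 <= p j) (p_sum1 : \sum_(j < n) p j = 1).

Lemma norm_convex_le (x : 'I_n -> V) :
  `|\sum_(j < n) p j *: x j| <= \sum_(j < n) p j * `|x j|.
Proof.
rewrite (eq_bigr (fun j => `|p j *: x j|)) ?ler_norm_sum // => j _.
by rewrite normrZ ger0_norm.
Qed.

Lemma convex_le (f : 'I_n -> K) (M : K) :
  (forall j, f j <= M) -> \sum_(j < n) p j * f j <= M.
Proof.
move=> f_le; rewrite -[M]mul1r -p_sum1 mulr_suml.
by apply: ler_sum => j _; rewrite ler_wpM2l.
Qed.

Lemma convex_centerE (a : V) (x : 'I_n -> V) :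
  \sum_(j < n) p j *: x j = a + \sum_(j < n) p j *: (x j - a).
Proof.
rewrite -[a in a + _]scale1r -p_sum1 scaler_suml -big_split /=.
by apply: eq_bigr => j _; rewrite -scalerDr addrC subrK.
Qed.

Context {a : V} {x : 'I_n -> V} {M : K}.
Hypothesis dist_le : forall j, `|x j - a| <= M.

Lemma norm_convex_ge : `|a| - M <= `|\sum_(j < n) p j *: x j|.
Proof.
rewrite (convex_centerE a); apply: le_trans (lerB_normD _ _).
rewrite lerD2l lerN2; apply: le_trans (norm_convex_le _) _.
exact: convex_le.
Qed.

Lemma convex_norm_le : \sum_(j < n) p j * `|x j| <= `|a| + M.
Proof.
apply: convex_le => j; rewrite -[x j](subrK a) addrC.
by apply: le_trans (ler_normD _ _) _; rewrite lerD2l.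
Qed.

End ConvexCombination.

Lemma convex_norm_ratio_ge (K : numFieldType) (V : normedModType K) (n : nat)
    (a : V) (x : 'I_n -> V) (p : 'I_n -> K) :
  a != 0 -> (forall j, `|x j - a| <= `|a|) ->
  (forall j, 0 <= p j) -> \sum_(j < n) p j = 1 ->
  let M := \big[Num.max/0]_(j < n) `|x j - a| in
  (`|a| - M) / (2 * `|a|) <= `|\sum_(j < n) p j *: x j| / (\sum_(j < n) p j * `|x j|)
  /\ 0 <= (`|a| - M) / (2 * `|a|).
Proof.
move=> a_neq0 dist_le p_ge0 p_sum1 M.
have a_gt0 : 0 < `|a| by rewrite normr_gt0.
have M_le : M <= `|a| by apply: bigmax_le => // j _.
have dist_leM j : `|x j - a| <= M.
  by apply: (@real_le_bigmax _ _ _ (fun j => `|x j - a|)); rewrite ?mem_index_enum.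
have u_ge0 : 0 <= `|a| - M by rewrite subr_ge0.
split; last by rewrite divr_ge0 // mulr_ge0.
apply: ler_div_chain => //.
- exact: norm_convex_ge.
- exact: norm_convex_le.
- apply: le_trans (convex_norm_le p_ge0 p_sum1 dist_leM) _.
  by rewrite mulr2n mulrDl mul1r lerD2l.
Qed.

Theorem proposition2p2 (R : realType) :
  (forall (V : normedModType R) (n : nat) (a : V) (x : 'I_n -> V) (p : 'I_n -> R),
    a != 0 -> (forall j, x j != 0) ->
    (forall j, `|(x j - a)| <= `|a|) ->
    (forall j, 0 <= p j) -> \sum_(j < n) p j = 1 ->
    `|\sum_(j < n) p j *: x j| / (\sum_(j < n) p j * `|x j|)
      >= (`|a| - \big[Num.max/0]_(j < n) `|(x j - a)|) / (2 * `|a|)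
    /\ (`|a| - \big[Num.max/0]_(j < n) `|(x j - a)|) / (2 * `|a|) >= 0)
  /\
  (forall (V : normedModType (complex R)) (n : nat) (a : V) (x : 'I_n -> V)
      (p : 'I_n -> complex R),
    a != 0 -> (forall j, x j != 0) ->
    (forall j, `|(x j - a)| <= `|a|) ->
    (forall j, 0 <= p j) -> \sum_(j < n) p j = 1 ->
    `|\sum_(j < n) p j *: x j| / (\sum_(j < n) p j * `|x j|)
      >= (`|a| - \big[Num.max/0]_(j < n) `|(x j - a)|) / (2 * `|a|)
    /\ (`|a| - \big[Num.max/0]_(j < n) `|(x j - a)|) / (2 * `|a|) >= 0).
Proof.
by split=> V n a x p a_neq0 _; apply: convex_norm_ratio_ge.
Qed.
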